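(* Let $r\ge3$. For every $P\in\mathbf W_{N,r}$, $$\pi(-P)\,E^{(r-1)}_{N,r}=\pi(P)\,F_{N,r}.$$
   Context: For integers $N,r\ge1$ let $S_{N,r}=\{(n_1,\dots,n_r)\in\mathbb Z^r:\ n_1+\dots+n_r=N,\ \text{each } n_i\ge3 \text{ odd}\}$; when used as an index set it is ordered lexicographically decreasingly. For $m=(m_1,\dots,m_r)$ and $n=(n_1,\dots,n_r)$ let $\delta\binom{m}{n}=1$ if $m_i=n_i$ for all $i$, and $0$ otherwise. $\mathbf V_{N,r}$ is the $\mathbb Q$-span of the monomials $x_1^{n_1-1}\cdots x_r^{n_r-1}$ with $(n_1,\dots,n_r)\in S_{N,r}$. $\mathsf{Vect}_{N,r}=\mathbb Q^{S_{N,r}}$ (row vectors), and $\pi:\mathbf V_{N,r}\to\mathsf{Vect}_{N,r}$ is the isomorphism sending $\sum a_{n_1,\dots,n_r}x_1^{n_1-1}\cdots x_r^{n_r-1}$ to $(a_{n_1,\dots,n_r})_{(n_1,\dots,n_r)\in S_{N,r}}$. For $r\ge2$, $\mathbf W_{N,r}=\{P\in\mathbf V_{N,r}: P(x_1,\dots,x_r)=P(x_2-x_1,x_2,x_3,\dots,x_r)-P(x_2-x_1,x_1,x_3,\dots,x_r)\}$. Ihara action: for $f\in\mathbb Q[t]$ and a polynomial $g$ in $r-1$ variables, $(f\mathbin{\underline\circ}g)(x_1,\dots,x_r)=f(x_1)g(x_2,\dots,x_r)+\sum_{i=1}^{r-1}\big(f(x_{i+1}-x_i)g(x_1,\dots,\widehat{x_{i+1}},\dots,x_r)-(-1)^{\deg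 f}f(x_i-x_{i+1})g(x_1,\dots,\widehat{x_i},\dots,x_r)\big)$ (hats denote omitted variables). For positive integers $m_i,n_i$, $e\binom{m_1,\dots,m_r}{n_1,\dots,n_r}$ is the coefficient of $x_1^{n_1-1}\cdots x_r^{n_r-1}$ in $t^{m_1-1}\mathbin{\underline\circ}\,(y_1^{m_2-1}\cdots y_{r-1}^{m_r-1})$. $E_{N,r}$ is the $S_{N,r}\times S_{N,r}$ matrix with $(m,n)$-entry $e\binom{m}{n}$. For $2\le j\le r$, $E^{(j)}_{N,r}$ is the $S_{N,r}\times S_{N,r}$ matrix with $(m,n)$-entry $\delta\binom{m_1,\dots,m_{r-j}}{n_1,\dots,n_{r-j}}\,e\binom{m_{r-j+1},\dots,m_r}{n_{r-j+1},\dots,n_r}$. $F_{N,r}=E_{N,r}-\mathrm{id}$. *)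

From HB Require Import structures.
From mathcomp Require Import all_boot all_order all_algebra.
Unset Printing Implicit Defensive.
Import Order.TTheory GRing.Theory Num.Theory.
Local Open Scope ring_scope.

(** Polynomials in r variables over Q, as iterated univariate polynomials:
    mpoly 0 = Q, mpoly (r+1) = (mpoly r)[x_1]; the outermost variable is
    x_1 (index 0), the next one x_2 (index 1), etc. *)
Fixpoint mpoly (r : nat) : comNzRingType :=
  match r with
  | 0 => rat
  | r'.+1 => {poly mpoly r'}
  end.

Fixpoint mcst (r : nat) (c : rat) : mpoly r :=
  match r return mpoly r with
  | 0 => c
  | r'.+1 => (mcst r' c)%:P : {poly mpoly r'}
  end.

(** the variable x_{i+1} (0-based index i); 0 if i >= r *)
Fixpoint mX (r i : nat) : mpoly r :=
  match r return mpoly r with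
  | 0 => 0
  | r'.+1 => (if i is i'.+1 then (mX r' i')%:P else 'X) : {poly mpoly r'}
  end.

Fixpoint mcoef (r : nat) : mpoly r -> seq nat -> rat :=
  match r return mpoly r -> seq nat -> rat with
  | 0 => fun c _ => c
  | r'.+1 => fun (p : {poly mpoly r'}) es => mcoef r' p`_(head 0%N es) (behead es)
  end.

Fixpoint mev (s : nat) (ys : seq (mpoly s)) (r : nat) : mpoly r -> mpoly s :=
  match r return mpoly r -> mpoly s with
  | 0 => fun c => mcst s c
  | r'.+1 => fun (p : {poly mpoly r'}) =>
      \sum_(i < size p) mev s (behead ys) r' p`_i * (head 0 ys) ^+ i
  end.

Definition mmono (r : nat) (es : seq nat) : mpoly r :=
  \prod_(i < r) mX r i ^+ nth 0%N es i.

Definition uev (s : nat) (f : {poly rat}) (y : mpoly s) : mpoly s :=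
  \sum_(i < size f) mcst s f`_i * y ^+ i.

Definition vars_but (r k : nat) : seq (mpoly r) :=
  [seq mX r j | j <- iota 0 r & j != k].

Definition ihara (r : nat) (f : {poly rat}) (g : mpoly r.-1) : mpoly r :=
  uev r f (mX r 0) * mev r (vars_but r 0) r.-1 g
  + \sum_(1 <= i < r)
      ( uev r f (mX r i - mX r i.-1) * mev r (vars_but r i) r.-1 g
      - (-1) ^+ (size f).-1 * uev r f (mX r i.-1 - mX r i)
          * mev r (vars_but r i.-1) r.-1 g ).

Definition ecoef (m n : seq nat) : rat :=
  let r := size m in
  mcoef r (ihara r ('X^((head 0%N m).-1) : {poly rat})
                (mmono r.-1 (map predn (behead m))))
        (map predn n).

(** S_{N,r}: tuples of odd integers >= 3 summing to N, listed in
    lexicographically decreasing order. *)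
Fixpoint Sset (N r : nat) : seq (seq nat) :=
  match r with
  | 0 => if N == 0%N then [:: [::]] else [::]
  | r'.+1 =>
      flatten [seq [seq k :: c | c <- Sset (N - k) r']
              | k <- rev [seq k <- iota 0 N.+1 | odd k && (3 <= k)%N]]
  end.

Definition nS (N r : nat) := size (Sset N r).
Definition Sidx (N r : nat) (i : 'I_(nS N r)) : seq nat := nth [::] (Sset N r) i.

Definition inV (N r : nat) (P : mpoly r) : Prop :=
  exists a : 'I_(nS N r) -> rat,
    P = \sum_(i < nS N r) mcst r (a i) * mmono r (map predn (Sidx N r i)).

Definition inW (N r : nat) (P : mpoly r) : Prop :=
  inV N r P /\
  P = mev r (mX r 1 - mX r 0 :: mX r 1 :: drop 2 (vars_but r r)) r P
      - mev r (mX r 1 - mX r 0 :: mX r 0 :: drop 2 (vars_but r r)) r P.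

Definition piV (N r : nat) (P : mpoly r) : 'rV[rat]_(nS N r) :=
  \row_i mcoef r P (map predn (Sidx N r i)).

Definition Emx (N r : nat) : 'M[rat]_(nS N r) :=
  \matrix_(i, j) ecoef (Sidx N r i) (Sidx N r j).

Definition Ejmx (N r j : nat) : 'M[rat]_(nS N r) :=
  \matrix_(i, k)
    ((take (r - j) (Sidx N r i) == take (r - j) (Sidx N r k))%:R
     * ecoef (drop (r - j) (Sidx N r i)) (drop (r - j) (Sidx N r k))).

Definition Fmx (N r : nat) : 'M[rat]_(nS N r) := Emx N r - 1%:M.

From HB Require Import structures.
From mathcomp Require Import all_boot all_order all_algebra.
From mathcomp Require Import ring.
Import GRing.Theory.
Local Open Scope ring_scope.

(** For even [k] the sign [(-1)^k] in the Ihara action disappears, so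
    [t^k o g] is the image of the monomial [x_1^k g(x_2,...,x_r)] under the
    linear operator
      [Phi Q = Q + sum_i (Q(x_{i+1}-x_i, x_1..^x_{i+1}..) - Q(x_i-x_{i+1}, x_1..^x_i..))].
    All first exponents [n_1 - 1] in [V_{N,r}] are even, hence [pi(P) E = pi(Phi P)];
    likewise [pi(P) E^(r-1) = pi(Phi' P)], where [Phi'] applies [Phi] in the
    variables [x_2..x_r] to the coefficients of [P] seen as a polynomial in [x_1].
    An element [P] of [W] is even in its first argument, and the defining
    relation of [W] makes it antisymmetric in its first two arguments.  Swapping
    them turns every term of [Phi' P] into minus a term of [Phi P] with index
    [i >= 2]; the remaining term [i = 1] of [Phi P] equals [-P] by the defining
    relation.  Hence [Phi P + Phi' P = P], which is the claim. *)

Lemma mcst_is_zmod_morphism r : zmod_morphism (mcst r).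
Proof. by elim: r => [//|r IH] a b /=; rewrite IH polyCB. Qed.

Lemma mcst_is_monoid_morphism r : monoid_morphism (mcst r).
Proof. by elim: r => [//|r IH] /=; split=> [|a b]; rewrite ?IH ?polyCM. Qed.

HB.instance Definition _ r := GRing.isZmodMorphism.Build rat (mpoly r) (mcst r)
  (mcst_is_zmod_morphism r).
HB.instance Definition _ r := GRing.isMonoidMorphism.Build rat (mpoly r) (mcst r)
  (mcst_is_monoid_morphism r).

Lemma mevS s ys r (p : mpoly r.+1) :
  mev s ys r.+1 p = (map_poly (mev s (behead ys) r) p).[head 0 ys].
Proof.
rewrite (@horner_coef_wide _ (size p)) ?size_poly //=.
by apply: eq_bigr => i _; rewrite coef_poly ltn_ord.
Qed.

Lemma mev_is_rmorphism s ys r :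
  zmod_morphism (mev s ys r) * monoid_morphism (mev s ys r).
Proof.
elim: r ys => [|r IH] ys.
  split; [exact: rmorphB | split; [exact: rmorph1 | exact: rmorphM]].
pose f : {rmorphism mpoly r -> mpoly s} := HB.pack (mev s (behead ys) r)
  (GRing.isZmodMorphism.Build _ _ _ (IH (behead ys)).1)
  (GRing.isMonoidMorphism.Build _ _ _ (IH (behead ys)).2).
have mevE : mev s ys r.+1 =1 horner_eval (head 0 ys) \o map_poly f by exact: mevS.
clearbody f.
split; first by move=> p q; rewrite !mevE /= !rmorphB.
by split=> [|p q]; rewrite !mevE /= ?rmorph1 ?rmorphM.
Qed.

HB.instance Definition _ s ys r := GRing.isZmodMorphism.Build _ _ (mev s ys r)
  (mev_is_rmorphism s ys r).1.
HB.instance Definition _ s ys r := GRing.isMonoidMorphism.Build _ _ (mev s ys r)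
  (mev_is_rmorphism s ys r).2.

(* Rewriting with the generic [rmorph*] lemmas leaves [mev] hidden behind its
   canonical structure, where the [mev]-specific rules below no longer match. *)
Lemma mevB s ys r : {morph mev s ys r : p q / p - q}.
Proof. exact: rmorphB. Qed.

Lemma mevN s ys r : {morph mev s ys r : p / - p}.
Proof. exact: rmorphN. Qed.

Lemma mevM s ys r : {morph mev s ys r : p q / p * q}.
Proof. exact: rmorphM. Qed.

Lemma mevXn s ys r n : {morph mev s ys r : p / p ^+ n}.
Proof. exact: rmorphXn. Qed.

Lemma mev_sum s ys r I (l : seq I) (F : I -> mpoly r) :
  mev s ys r (\sum_(i <- l) F i) = \sum_(i <- l) mev s ys r (F i).
Proof. exact: raddf_sum. Qed.

Lemma mevC s ys r (c : mpoly r) : mev s ys r.+1 c%:P = mev s (behead ys) r c.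
Proof. by rewrite mevS map_polyC hornerC. Qed.

Lemma mevX s ys r : mev s ys r.+1 'X = head 0 ys.
Proof. by rewrite mevS map_polyX hornerX. Qed.

Lemma mev_mcst s ys r c : mev s ys r (mcst r c) = mcst s c.
Proof. by elim: r ys => [//|r IH] ys; rewrite [mcst _ _]/= mevC IH. Qed.

Lemma mev_mX s ys r i : (i < r)%N -> mev s ys r (mX r i) = nth 0 ys i.
Proof.
elim: r ys i => [//|r IH] ys [|i] lt_ir; rewrite [mX _ _]/=; first by rewrite mevX nth0.
by rewrite mevC IH // nth_behead.
Qed.

Lemma head_map_raddf (U V : zmodType) (f : {additive U -> V}) (zs : seq U) :
  head 0 (map f zs) = f (head 0 zs).
Proof. by case: zs => [|z zs] //=; rewrite raddf0. Qed.

Lemma mev_map_polyC s zs r q :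
  mev s.+1 (map polyC zs) r q = (mev s zs r q)%:P.
Proof.
elim: r zs q => [//|r IH] zs q.
rewrite !mevS behead_map head_map_raddf -horner_map -map_poly_comp.
by congr (_.[_]); apply: eq_map_poly => c; rewrite IH.
Qed.

Lemma mev_X_polyC s zs r (q : mpoly r.+1) :
  mev s.+1 ('X :: map polyC zs) r.+1 q = map_poly (mev s zs r) q.
Proof.
rewrite mevS /= (eq_map_poly (mev_map_polyC s zs r)) map_poly_comp.
exact: comp_polyXr.
Qed.

Lemma mev_comp s ys t zs u p :
  mev s ys t (mev t zs u p) = mev s (map (mev s ys t) zs) u p.
Proof.
elim: u zs p => [|u IH] zs p; first by rewrite /= mev_mcst.
rewrite !mevS behead_map head_map_raddf -horner_map -map_poly_comp.
by congr (_.[_]); apply: eq_map_poly => c; rewrite /= IH.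
Qed.

Lemma vars_butS r k :
  vars_but r.+1 k.+1 = 'X :: map polyC (vars_but r k).
Proof.
rewrite /vars_but [iota 0 r.+1]/= -[1%N]addn0 iotaDl [filter _ _]/= filter_map.
by rewrite map_cons -!map_comp.
Qed.

Lemma vars_but_all r : vars_but r r = map (mX r) (iota 0 r).
Proof.
congr map; apply/all_filterP/allP => j.
by rewrite mem_iota add0n => /andP[_ /ltn_eqF ->].
Qed.

Lemma vars_but0 r : vars_but r.+1 0 = map polyC (vars_but r r).
Proof.
rewrite vars_but_all /vars_but [iota 0 r.+1]/= -[1%N]addn0 iotaDl [filter _ _]/=.
by rewrite filter_map (@eq_filter _ _ predT) // filter_predT -!map_comp.
Qed.

Lemma mev_vars r q : mev r (vars_but r r) r q = q.
Proof.
elim: r q => [//|r IH] q.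
by rewrite vars_butS mev_X_polyC (eq_map_poly IH) map_poly_id.
Qed.

Lemma vars_but_head0 r : mX r.+1 0 :: vars_but r.+1 0 = vars_but r.+1 r.+1.
Proof. by rewrite vars_butS vars_but0. Qed.

Lemma mev_map_vars s ys r : mev s (map (mev s ys r) (vars_but r r)) r =1 mev s ys r.
Proof. by move=> q; rewrite -mev_comp mev_vars. Qed.

Lemma mev_cons_ext s y zs zs' r (q : mpoly r.+1) :
  mev s zs r =1 mev s zs' r -> mev s (y :: zs) r.+1 q = mev s (y :: zs') r.+1 q.
Proof. by move=> eq_zs; rewrite !mevS (eq_map_poly eq_zs). Qed.

Lemma mcoef0 r es : mcoef r 0 es = 0.
Proof. by elim: r es => [//|r IH] es /=; rewrite coef0 IH. Qed.

Lemma mcoefD r p q es : mcoef r (p + q) es = mcoef r p es + mcoef r q es.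
Proof. by elim: r p q es => [//|r IH] p q es /=; rewrite coefD IH. Qed.

Lemma mcoefN r p es : mcoef r (- p) es = - mcoef r p es.
Proof. by apply/eqP; rewrite -subr_eq0 opprK -mcoefD addNr mcoef0. Qed.

Lemma mcoef_sum r es I (s : seq I) (F : I -> mpoly r) :
  mcoef r (\sum_(i <- s) F i) es = \sum_(i <- s) mcoef r (F i) es.
Proof. exact: (big_morph _ (fun p q => mcoefD r p q es) (mcoef0 r es)). Qed.

Lemma mcoefCM r c p es : mcoef r (mcst r c * p) es = c * mcoef r p es.
Proof. by elim: r p es => [//|r IH] p es /=; rewrite coefCM IH. Qed.

Lemma mcoef_cons r (p : mpoly r.+1) e es : mcoef r.+1 p (e :: es) = mcoef r p`_e es.
Proof. by []. Qed.

Lemma mmonoS r es :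
  mmono r.+1 es = (mmono r (behead es))%:P * 'X^(head 0%N es).
Proof.
rewrite /mmono big_ord_recl mulrC rmorph_prod; congr (_ * _).
by apply: eq_bigr => i _; rewrite rmorphXn /= nth_behead.
Qed.

Lemma mcoef_mmono r es es' : size es = r -> size es' = r ->
  mcoef r (mmono r es) es' = (es == es')%:R.
Proof.
elim: r es es' => [|r IH] [|e es] [|e' es'] //=; first by rewrite /mmono big_ord0.
move=> [size_es] [size_es'].
rewrite (mmonoS r (e :: es)) coefCM coefXn eqseq_cons eq_sym.
by case: eqP => _; rewrite ?mulr1 ?IH ?mulr0 ?mcoef0.
Qed.

Lemma mev_mmono_cons s y zs r k es :
  mev s (y :: zs) r.+1 (mmono r.+1 (k :: es)) = y ^+ k * mev s zs r (mmono r es).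
Proof. by rewrite mmonoS mevM mevXn mevC mevX mulrC. Qed.

Lemma mem_Sset N r n : n \in Sset N r ->
  size n = r /\ all (fun k => odd k && (3 <= k)%N) n.
Proof.
elim: r N n => [|r IH] N n /=; first by case: (N == 0%N) => //; rewrite inE => /eqP->.
move=> /flatten_mapP[k]; rewrite mem_rev mem_filter => /andP[odd_k _] /mapP[c c_in ->].
by have [size_c all_c] := IH _ _ c_in; rewrite /= size_c odd_k all_c.
Qed.

Lemma Sset_uniq N r : uniq (Sset N r).
Proof.
elim: r N => [|r IH] N /=; first by case: (N == 0%N).
apply: (@allpairs_uniq_dep nat (fun _ => seq nat) _ (fun k c => k :: c)).
- by rewrite rev_uniq filter_uniq // iota_uniq.
- by move=> k _; exact: IH.
- by move=> [k1 c1] [k2 c2] _ _ /= [-> ->].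
Qed.

Lemma Sidx_size N r i : size (Sidx N r i) = r.
Proof. by have [] := mem_Sset _ _ _ (mem_nth [::] (ltn_ord i)). Qed.

Lemma Sidx_odd N r i : all (fun k => odd k && (3 <= k)%N) (Sidx N r i).
Proof. by have [] := mem_Sset _ _ _ (mem_nth [::] (ltn_ord i)). Qed.

Lemma Sidx_cons N r i : exists n ns, Sidx N r.+1 i = n :: ns
  /\ [/\ size ns = r, odd n & all (fun k => odd k && (3 <= k)%N) ns].
Proof.
move: (Sidx_size N r.+1 i) (Sidx_odd N r.+1 i).
case: (Sidx N r.+1 i) => [//|n ns] [size_ns] /= /andP[/andP[odd_n _] all_ns].
by exists n, ns.
Qed.

Lemma Sidx_predn_inj N r i j :
  (map predn (Sidx N r i) == map predn (Sidx N r j)) = (i == j).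
Proof.
apply/eqP/eqP => [eq_ij|-> //]; apply: val_inj; apply/eqP.
rewrite -(nth_uniq [::] _ _ (Sset_uniq N r)) ?ltn_ord //; apply/eqP.
have pos k : all (fun n => 0 < n)%N (Sidx N r k).
  by apply: sub_all (Sidx_odd N r k) => n /andP[_ /ltnW /ltnW].
move: eq_ij (pos i) (pos j); rewrite /Sidx.
elim: (nth _ _ i) (nth _ _ j) => [|m s IH] [|n t] //= [eq_mn /IH{}IH].
by move=> /andP[m_gt0 /IH{}IH] /andP[n_gt0 /IH->]; rewrite -(prednK m_gt0) eq_mn prednK.
Qed.

Lemma piVD N r p q : piV N r (p + q) = piV N r p + piV N r q.
Proof. by apply/rowP => j; rewrite !mxE mcoefD. Qed.

Lemma piVN N r p : piV N r (- p) = - piV N r p.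
Proof. by apply/rowP => j; rewrite !mxE mcoefN. Qed.

Lemma mcoef_inV N r (a : 'I_(nS N r) -> rat) j :
  mcoef r (\sum_i mcst r (a i) * mmono r (map predn (Sidx N r i)))
    (map predn (Sidx N r j)) = a j.
Proof.
rewrite mcoef_sum (bigD1 j) //= big1 => [|i neq_ij]; rewrite mcoefCM mcoef_mmono;
  rewrite ?size_map ?Sidx_size ?Sidx_predn_inj ?eqxx ?mulr1 ?addr0 //.
by rewrite (negbTE neq_ij) mulr0.
Qed.

Lemma piV_mulmx N r (T : {additive mpoly r -> mpoly r}) (M : 'M[rat]_(nS N r)) P :
  (forall c q, T (mcst r c * q) = mcst r c * T q) ->
  (forall k j, M k j =
     mcoef r (T (mmono r (map predn (Sidx N r k)))) (map predn (Sidx N r j))) ->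
  inV N r P -> piV N r P *m M = piV N r (T P).
Proof.
move=> TZ ME [a ->]; apply/rowP => j; rewrite !mxE raddf_sum mcoef_sum.
by apply: eq_bigr => k _; rewrite !mxE mcoef_inV ME TZ mcoefCM.
Qed.

Definition ihara_op r (q : mpoly r) : mpoly r :=
  mev r (mX r 0 :: vars_but r 0) r q
  + \sum_(1 <= i < r) (mev r (mX r i - mX r i.-1 :: vars_but r i) r q
                       - mev r (mX r i.-1 - mX r i :: vars_but r i.-1) r q).

Lemma ihara_op_is_zmod_morphism r : zmod_morphism (ihara_op r).
Proof.
move=> p q; rewrite /ihara_op mevB opprD addrACA -sumrB; congr (_ + _).
by apply: eq_bigr => i _; rewrite !mevB; ring.
Qed.

HB.instance Definition _ r := GRing.isZmodMorphism.Build _ _ (ihara_op r)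
  (ihara_op_is_zmod_morphism r).

Lemma ihara_op_mcstM r c q : ihara_op r (mcst r c * q) = mcst r c * ihara_op r q.
Proof.
rewrite /ihara_op mevM mev_mcst mulrDr mulr_sumr; congr (_ + _).
by apply: eq_bigr => i _; rewrite !mevM !mev_mcst mulrBr.
Qed.

Lemma uevXn r k y : uev r 'X^k y = y ^+ k.
Proof.
rewrite /uev size_polyXn big_ord_recr /= coefXn eqxx rmorph1 mul1r big1 ?add0r //.
by move=> i _; rewrite coefXn (ltn_eqF (ltn_ord i)) rmorph0 mul0r.
Qed.

Lemma ihara_Xn_mmono r k es : ~~ odd k ->
  ihara r.+1 'X^k (mmono r es) = ihara_op r.+1 (mmono r.+1 (k :: es)).
Proof.
move=> even_k; rewrite /ihara /ihara_op !uevXn mev_mmono_cons; congr (_ + _).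
apply: eq_bigr => i _; rewrite !mev_mmono_cons !uevXn size_polyXn /=.
by rewrite -signr_odd (negbTE even_k) expr0 mul1r.
Qed.

Lemma ecoefE m n : odd (head 0%N m) -> ecoef m n =
  mcoef (size m) (ihara_op (size m) (mmono (size m) (map predn m))) (map predn n).
Proof. by case: m => [//|[//|k] m] /= odd_k; rewrite /ecoef ihara_Xn_mmono. Qed.

Lemma piV_Emx N r P : inV N r.+1 P ->
  piV N r.+1 P *m Emx N r.+1 = piV N r.+1 (ihara_op r.+1 P).
Proof.
apply: piV_mulmx => [|k j]; first exact: ihara_op_mcstM.
have [n [ns [Sk [size_ns odd_n _]]]] := Sidx_cons N r k.
by rewrite mxE ecoefE Sk //= size_ns.
Qed.

Lemma map_poly_mcstM r (f : {additive mpoly r -> mpoly r}) c (q : mpoly r.+1) :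
  (forall q', f (mcst r c * q') = mcst r c * f q') ->
  map_poly f (mcst r.+1 c * q) = mcst r.+1 c * map_poly f q.
Proof.
by move=> fZ; apply/polyP => b; rewrite [mcst r.+1 c]/= coef_map !coefCM coef_map fZ.
Qed.

Lemma mcoef_map_poly_mmono r (f : {additive mpoly r -> mpoly r}) e es e' es' :
  mcoef r.+1 (map_poly f (mmono r.+1 (e :: es))) (e' :: es')
  = (e' == e)%:R * mcoef r (f (mmono r es)) es'.
Proof.
rewrite mcoef_cons coef_map mmonoS coefCM coefXn.
by case: eqP => _; rewrite ?mulr1 ?mul1r ?mulr0 ?mul0r ?raddf0 ?mcoef0.
Qed.

Lemma piV_Ejmx N r P : inV N r.+2 P ->
  piV N r.+2 P *m Ejmx N r.+2 r.+1 = piV N r.+2 (map_poly (ihara_op r.+1) P).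
Proof.
(* The additive structure of [map_poly] is found at type [{poly _}], not at the
   convertible [mpoly r.+2]. *)
pose T : {additive {poly mpoly r.+1} -> {poly mpoly r.+1}} := map_poly (ihara_op r.+1).
apply: (@piV_mulmx N r.+2 T) => [c q|k j].
  exact: (@map_poly_mcstM r.+1 (ihara_op r.+1) c q (ihara_op_mcstM r.+1 c)).
have [m [ms [Sk [size_ms odd_m all_ms]]]] := Sidx_cons N r.+1 k.
have [n [ns [Sj [_ odd_n _]]]] := Sidx_cons N r.+1 j.
have odd_ms : odd (head 0%N ms).
  by case: (ms) size_ms all_ms => [//|m' ms'] _ /andP[/andP[]].
have eq_predn : (n.-1 == m.-1) = (m == n).
  by rewrite -(inj_eq succn_inj) !prednK ?odd_gt0 // eq_sym.
rewrite mxE subSnn Sk Sj !take_cons !take0 !drop_cons !drop0 eqseq_cons eqxx andbT.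
by rewrite ecoefE // size_ms !map_cons mcoef_map_poly_mmono eq_predn.
Qed.

Lemma map_poly_ihara_op r (q : mpoly r.+1) :
  map_poly (ihara_op r) q =
  map_poly (mev r (mX r 0 :: vars_but r 0) r) q
  + \sum_(1 <= i < r) (map_poly (mev r (mX r i - mX r i.-1 :: vars_but r i) r) q
                       - map_poly (mev r (mX r i.-1 - mX r i :: vars_but r i.-1) r) q).
Proof.
apply/polyP => b; rewrite coef_map_id0 ?raddf0 // coefD coef_map_id0 ?raddf0 //.
rewrite coef_sum; congr (_ + _); apply: eq_bigr => i _.
by rewrite coefB !coef_map_id0 ?raddf0.
Qed.

Lemma mev_oppr_head N r P s a ys : inV N r.+1 P ->
  mev s (- a :: ys) r.+1 P = mev s (a :: ys) r.+1 P.
Proof.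
case=> c ->; rewrite !mev_sum; apply: eq_bigr => k _; rewrite !mevM !mev_mcst.
have [n [ns [-> [_ odd_n _]]]] := Sidx_cons N r k.
rewrite map_cons !mev_mmono_cons exprNn -signr_odd.
by case: n odd_n => //= n /negPf->; rewrite expr0 mul1r.
Qed.

Section WSpace.
Variables (N r : nat) (P : mpoly r.+2).
Hypothesis P_W : inW N r.+2 P.

Local Notation x i := (mX r.+2 i).
Let xs : seq (mpoly r.+2) := map polyC (map polyC (vars_but r r)).

Lemma vars_but_SS : vars_but r.+2 r.+2 = x 0 :: x 1 :: xs.
Proof. by rewrite !vars_butS. Qed.

Lemma vars_but_S0 : vars_but r.+2 0 = x 1 :: xs.
Proof. by rewrite vars_but0 vars_butS. Qed.

Lemma vars_but_S1 : vars_but r.+2 1 = x 0 :: xs.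
Proof. by rewrite vars_butS vars_but0. Qed.

Lemma map_mev_xs s y0 y1 ys :
  map (mev s (y0 :: y1 :: ys) r.+2) xs = map (mev s ys r) (vars_but r r).
Proof. by rewrite -!map_comp; apply: eq_map => c; rewrite /comp !mevC. Qed.

Lemma W_relation : P = mev r.+2 (x 1 - x 0 :: x 1 :: xs) r.+2 P
                       - mev r.+2 (x 1 - x 0 :: x 0 :: xs) r.+2 P.
Proof.
have drop2 : drop 2 (vars_but r.+2 r.+2) = xs by rewrite vars_but_SS /= drop0.
by case: P_W => _; rewrite drop2.
Qed.

Lemma mev_swap12 : mev r.+2 (x 1 :: x 0 :: xs) r.+2 P = - P.
Proof.
have xs_fixed : map (mev r.+2 (x 1 :: x 0 :: xs) r.+2) xs = xs.
  have mev_xs : mev r.+2 xs r =1 polyC \o polyC.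
    by move=> c; rewrite !mev_map_polyC mev_vars.
  by rewrite map_mev_xs (eq_map mev_xs) map_comp.
have flip : x 0 - x 1 = - (x 1 - x 0) by rewrite opprB.
rewrite {1}W_relation mevB !mev_comp !map_cons xs_fixed !mevB !mev_mX // flip.
by rewrite !(mev_oppr_head _ _ _ _ _ _ P_W.1) {3}W_relation opprB.
Qed.

Lemma mev_antisym s a b ys :
  mev s (a :: b :: ys) r.+2 P = - mev s (b :: a :: ys) r.+2 P.
Proof.
have := congr1 (mev s (b :: a :: ys) r.+2) mev_swap12.
rewrite mevN mev_comp !map_cons !mev_mX // map_mev_xs => <-.
by apply: mev_cons_ext => q; apply: mev_cons_ext => q'; rewrite mev_map_vars.
Qed.

Lemma map_poly_mev_antisym (d : mpoly r.+1) k :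
  map_poly (mev r.+1 (d :: vars_but r.+1 k) r.+1) P
  = - mev r.+2 (d%:P :: vars_but r.+2 k.+1) r.+2 P.
Proof. by rewrite -mev_X_polyC map_cons mev_antisym vars_butS. Qed.

Lemma ihara_op_first_term :
  mev r.+2 (x 1 - x 0 :: vars_but r.+2 1) r.+2 P
  - mev r.+2 (x 0 - x 1 :: vars_but r.+2 0) r.+2 P = - P.
Proof.
have flip : x 0 - x 1 = - (x 1 - x 0) by rewrite opprB.
rewrite vars_but_S0 vars_but_S1 flip (mev_oppr_head _ _ _ _ _ _ P_W.1).
by rewrite {3}W_relation opprB.
Qed.

Lemma ihara_op_add_map_poly : ihara_op r.+2 P + map_poly (ihara_op r.+1) P = P.
Proof.
rewrite map_poly_ihara_op /ihara_op !vars_but_head0 mev_vars.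
rewrite (eq_map_poly (mev_vars r.+1)) map_poly_id // big_ltn // big_add1.
change 1.-1 with 0%N; change r.+2.-1 with r.+1.
rewrite ihara_op_first_term.
set S := \sum_(1 <= i < r.+1) _.
have -> : \sum_(1 <= i < r.+1) (map_poly (mev r.+1 (mX r.+1 i - mX r.+1 i.-1
       :: vars_but r.+1 i) r.+1) P - map_poly (mev r.+1 (mX r.+1 i.-1 - mX r.+1 i
       :: vars_but r.+1 i.-1) r.+1) P) = - S.
  rewrite -sumrN; apply: eq_big_nat => -[//|j] _.
  by rewrite !map_poly_mev_antisym !polyCB opprB opprK addrC.
by rewrite addNKr addrC addrNK.
Qed.

End WSpace.

Theorem lemma4p9 (N r : nat) (hr : (3 <= r)%N) (P : mpoly r) :
  inW N r P -> piV N r (- P) *m Ejmx N r r.-1 = piV N r P *m Fmx N r.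
Proof.
case: r hr P => [|[|[|r]]] // _ P P_W.
have P_V : inV N r.+3 P by case: P_W.
rewrite /Fmx mulmxBr mulmx1 piV_Emx // piVN mulNmx piV_Ejmx //.
by rewrite -{3}(ihara_op_add_map_poly _ _ _ P_W) piVD opprD addNKr.
Qed.
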